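(* Let $D\subset \mathbb{R}^2$ be a link diagram, and let $D'$ and $D''$ be two vertically trivial states of $D$. Then there is a sequence $D_0,D_1,\dots,D_n$ of vertically trivial states of $D$ with $D_0=D'$ and $D_n=D''$ such that, for each $i=1,\dots,n$, $D_i$ is obtained from $D_{i-1}$ either by changing a single self-crossing of one component, or by changing all the crossings between two vertically adjacent components.
   Context: A link $L\subset\mathbb{R}^3$ is represented by a diagram $D\subset\mathbb{R}^2$: its orthogonal projection to $\mathbb{R}^2$ (assumed self-transversal) together with a crossing state at each double point telling which arc passes over; height means the third coordinate. A state of $D$ is any diagram obtained from $D$ by changing some of its crossing states (same projection). A link is vertically trivial if it meets every horizontal plane $\{z=c\}$ in at most two points, both belonging to the same component; for such a link the components have pairwise disjoint height intervals, hence are linearly ordered by height. A vertically trivial state of $D$ is a state of $D$ which is the diagram of a vertically trivial link. Two components are vertically adjacent if they are consecutive in the height order of a vertically trivial link having the given state as its diagram; changing all crossings between two vertically adjacent components transposes them in the vertical order. *)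

From Stdlib Require Import Reals.
From Coquelicot Require Import Coquelicot.
From mathcomp Require Import all_boot.

Set Implicit Arguments.
Unset Strict Implicit.
Unset Printing Implicit Defensive.
Local Open Scope R_scope.

(* Each component of the link (and of its planar projection) is a closed
   curve parametrized by a 1-periodic map on R; the fundamental domain of
   parameters is [0,1). *)
Definition in01 (t : R) : Prop := (0 <= t) /\ (t < 1).

(* A crossing (double point of the projection) of a diagram with m components:
   the two preimages (component c1 at parameter s1) and (component c2 at
   parameter s2). *)
Record crossing (m : nat) := Crossing {
  cr_c1 : 'I_m; cr_s1 : R; cr_c2 : 'I_m; cr_s2 : R }.

Definition dparam (m : nat) (i : 'I_m) (s : R) (j : 'I_m) (t : R) : Prop :=
  ~ (i = j /\ s = t).

Definition crossing_at (m : nat) (c : crossing m) (i : 'I_m) (s : R)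
    (j : 'I_m) (t : R) : Prop :=
  (cr_c1 c = i /\ cr_s1 c = s /\ cr_c2 c = j /\ cr_s2 c = t) \/
  (cr_c1 c = j /\ cr_s1 c = t /\ cr_c2 c = i /\ cr_s2 c = s).

Definition crossing_of (m : nat) (cr : seq (crossing m)) (k : 'I_(size cr))
  : crossing m := tnth (in_tuple cr) k.

(* The projection of a link diagram: m closed planar curves
   t |-> (gx i t, gy i t), i : 'I_m, which are C^1, regular, and together
   self-transversal: the only multiple points are finitely many transverse
   double points; [cr] lists every double point exactly once. *)
Definition is_diagram_projection (m : nat) (gx gy : 'I_m -> R -> R)
    (cr : seq (crossing m)) : Prop :=
  (forall i t, gx i (t + 1) = gx i t /\ gy i (t + 1) = gy i t) /\
  (forall i t, ex_derive (gx i) t /\ ex_derive (gy i) t) /\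
  (forall i t, continuous (Derive (gx i)) t /\ continuous (Derive (gy i)) t) /\
  (forall i t, Derive (gx i) t <> 0 \/ Derive (gy i) t <> 0) /\
  (forall k : 'I_(size cr),
     let c := crossing_of k in
     in01 (cr_s1 c) /\ in01 (cr_s2 c) /\
     dparam (cr_c1 c) (cr_s1 c) (cr_c2 c) (cr_s2 c) /\
     gx (cr_c1 c) (cr_s1 c) = gx (cr_c2 c) (cr_s2 c) /\
     gy (cr_c1 c) (cr_s1 c) = gy (cr_c2 c) (cr_s2 c) /\
     (Derive (gx (cr_c1 c)) (cr_s1 c) * Derive (gy (cr_c2 c)) (cr_s2 c)
      - Derive (gy (cr_c1 c)) (cr_s1 c) * Derive (gx (cr_c2 c)) (cr_s2 c)
      <> 0)) /\
  (forall i s j t, in01 s -> in01 t -> dparam i s j t ->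
     gx i s = gx j t -> gy i s = gy j t ->
     exists k : 'I_(size cr), crossing_at (crossing_of k) i s j t /\
       forall k' : 'I_(size cr), crossing_at (crossing_of k') i s j t -> k' = k) /\
  (forall i s j t l u, in01 s -> in01 t -> in01 u ->
     dparam i s j t -> dparam i s l u -> dparam j t l u ->
     gx i s = gx j t -> gy i s = gy j t -> gx i s = gx l u -> gy i s = gy l u ->
     False).

(* A state of the diagram: at each crossing k, [S k = true] means the strand
   (cr_c1, cr_s1) passes over, [false] means (cr_c2, cr_s2) passes over. *)
Definition state (m : nat) (cr : seq (crossing m)) := {ffun 'I_(size cr) -> bool}.

(* The link in R^3 with components t |-> (gx i t, gy i t, h i t) (h = height,
   the third coordinate) has diagram (projection, S). *)
Definition realizes (m : nat) (cr : seq (crossing m)) (S : state cr)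
    (h : 'I_m -> R -> R) : Prop :=
  (forall i t, h i (t + 1) = h i t) /\
  (forall i t, continuous (h i) t) /\
  (forall k : 'I_(size cr),
     let c := crossing_of k in
     if S k then (h (cr_c2 c) (cr_s2 c) < h (cr_c1 c) (cr_s1 c))
            else (h (cr_c1 c) (cr_s1 c) < h (cr_c2 c) (cr_s2 c))).

(* Vertically trivial link: every horizontal plane z = const meets it in at
   most two points, both on the same component.  (Distinct parameters give
   distinct points of the link, since the heights differ at crossings.) *)
Definition vertically_trivial_link (m : nat) (h : 'I_m -> R -> R) : Prop :=
  (forall i s j t, in01 s -> in01 t -> dparam i s j t ->
     h i s = h j t -> i = j) /\
  (forall i s j t l u, in01 s -> in01 t -> in01 u ->
     dparam i s j t -> dparam i s l u -> dparam j t l u ->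
     h i s = h j t -> h j t = h l u -> False).

Definition vertically_trivial_state (m : nat) (cr : seq (crossing m))
    (S : state cr) : Prop :=
  exists h : 'I_m -> R -> R, realizes S h /\ vertically_trivial_link h.

(* Components a, b are vertically adjacent for the state S: they are
   consecutive in the height order of some vertically trivial link having
   S as diagram (no third component lies strictly between them). *)
Definition vertically_adjacent (m : nat) (cr : seq (crossing m))
    (S : state cr) (a b : 'I_m) : Prop :=
  a <> b /\
  exists h : 'I_m -> R -> R, realizes S h /\ vertically_trivial_link h /\
    ~ (exists (c : 'I_m) (s t u : R), c <> a /\ c <> b /\
         ((h a t < h c s /\ h c s < h b u) \/
          (h b t < h c s /\ h c s < h a u))).

Definition is_self_crossing (m : nat) (cr : seq (crossing m))
    (k : 'I_(size cr)) : bool :=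
  cr_c1 (crossing_of k) == cr_c2 (crossing_of k).

Definition change_crossing (m : nat) (cr : seq (crossing m)) (S : state cr)
    (k : 'I_(size cr)) : state cr :=
  [ffun j => if j == k then ~~ S j else S j].

Definition between (m : nat) (cr : seq (crossing m)) (a b : 'I_m)
    (k : 'I_(size cr)) : bool :=
  let c := crossing_of k in
  ((cr_c1 c == a) && (cr_c2 c == b)) || ((cr_c1 c == b) && (cr_c2 c == a)).

Definition change_between (m : nat) (cr : seq (crossing m)) (S : state cr)
    (a b : 'I_m) : state cr :=
  [ffun j => if between a b j then ~~ S j else S j].

Definition move (m : nat) (cr : seq (crossing m)) (S T : state cr) : Prop :=
  (exists k : 'I_(size cr), is_self_crossing k /\ T = change_crossing S k) \/
  (exists a b : 'I_m, vertically_adjacent S a b /\ T = change_between S a b).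

(* A vertically trivial state is described by the height order of its components, a
   permutation [r], together with, for each component, real positions [U] of its marked
   points (the parameter 0 and the preimages of its crossings) recording in which cyclic
   order they occur along the unimodal height profile of the component, the heights being
   [cos2pi U].  Conversely, any such data giving different heights to the two preimages of
   each self-crossing is realized by a vertically trivial link whose components lie in
   disjoint horizontal bands.  To connect two vertically trivial states, slide the
   positions of the first one linearly to a fixed reference configuration, moving one
   marked point at a time and perturbing it so that each step changes at most one
   self-crossing; then sort the components of the reference configuration by transpositions
   of vertically adjacent components, each of which changes exactly the crossings between
   them; finally slide the positions back to those of the second state. *)

From Pilot Require Import Defs.
From Stdlib Require Import Reals ZArith Lra Lia Relations ClassicalEpsilon Classical.
From Coquelicot Require Import Coquelicot.
From mathcomp Require Import all_boot fingroup perm zify.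

Set Implicit Arguments.
Unset Strict Implicit.
Unset Printing Implicit Defensive.
Local Open Scope R_scope.

(** * Periodic functions and the height profile [cos2pi] *)

Definition periodic (f : R -> R) : Prop := forall t, f (t + 1) = f t.

Lemma periodic_INR f : periodic f -> forall n t, f (t + INR n) = f t.
Proof.
  move=> fP; elim=> [|n IHn] t; first by rewrite Rplus_0_r.
  by rewrite S_INR -Rplus_assoc fP IHn.
Qed.

Lemma periodic_IZR f : periodic f -> forall k t, f (t + IZR k) = f t.
Proof.
  move=> fP [|p|p] t; first by rewrite Rplus_0_r.
  - by rewrite -positive_nat_Z -INR_IZR_INZ periodic_INR.
  - rewrite -(periodic_INR fP (Pos.to_nat p)) INR_IZR_INZ positive_nat_Z.
    by rewrite Rplus_assoc -plus_IZR (_ : (Z.neg p + Z.pos p = 0)%Z) ?Rplus_0_r //; lia.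
Qed.

Lemma frac_part_of (t : R) (n : Z) : IZR n <= t < IZR n + 1 -> frac_part t = t - IZR n.
Proof.
  move=> tn; suff [_ <-] : n = Int_part t /\ t - IZR n = frac_part t by [].
  by apply: Int_part_frac_part_spec; [lra | ring].
Qed.

Lemma frac_part_id (t : R) : 0 <= t < 1 -> frac_part t = t.
Proof. by move=> t01; rewrite (frac_part_of (n := 0)) /=; lra. Qed.

Lemma frac_part_bound (t : R) : 0 <= frac_part t < 1.
Proof. have := base_fp t; lra. Qed.

Lemma periodic_frac_part f : periodic f -> forall t, f (frac_part t) = f t.
Proof.
  by move=> fP t; rewrite {2}(Rplus_Int_part_frac_part t) Rplus_comm periodic_IZR.
Qed.

Lemma frac_part_periodic : periodic frac_part.
Proof.
  move=> t; have := Rplus_Int_part_frac_part t; have := frac_part_bound t => ? ?.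
  by rewrite (@frac_part_of (t + 1) (Int_part t + 1)) plus_IZR; lra.
Qed.

Lemma frac_part_inj_window w a b : w <= a < w + 1 -> w <= b < w + 1 ->
  frac_part a = frac_part b -> a = b.
Proof.
  move=> aw bw fab; have := Rplus_Int_part_frac_part a; have := Rplus_Int_part_frac_part b.
  move=> eb ea; have dab : a - b = IZR (Int_part a - Int_part b) by rewrite minus_IZR; lra.
  have /one_IZR_lt1 d0 : -1 < IZR (Int_part a - Int_part b) < 1 by rewrite -dab; lra.
  by move: dab; rewrite d0 /=; lra.
Qed.

Lemma ivt_interval (f : R -> R) a b y : (forall x, continuous f x) -> a <= b ->
  f a <= y <= f b \/ f b <= y <= f a -> exists2 x, a <= x <= b & f x = y.
Proof.
  move=> fC ab fy.
  have yR : Rmin (f a) (f b) <= y <= Rmax (f a) (f b).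
    by rewrite /Rmin /Rmax; case: Rle_dec; lra.
  have [x [xab fx]] := IVT_gen_consistent f a b y fC yR.
  by exists x; move: xab; rewrite Rmin_left ?Rmax_right //; lra.
Qed.

Lemma locally_between (t a b : R) (P : R -> Prop) :
  a < t < b -> (forall s, a < s < b -> P s) -> locally t P.
Proof.
  move=> tab abP; have d_gt0 : 0 < Rmin (t - a) (b - t) by apply: Rmin_glb_lt; lra.
  exists (mkposreal _ d_gt0) => s ts; apply: abP.
  change (Rabs (s - t) < Rmin (t - a) (b - t)) in ts; move/Rabs_def2: ts.
  have := Rmin_l (t - a) (b - t); have := Rmin_r (t - a) (b - t); lra.
Qed.

Lemma continuous_Rmax (f g : R -> R) x : continuous f x -> continuous g x ->
  continuous (fun t => Rmax (f t) (g t)) x.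
Proof.
  move=> fC gC; apply: (continuous_ext (fun t => (f t + g t + Rabs (f t - g t)) / 2)).
    by move=> t; rewrite /Rmax; case: Rle_dec => fg;
      [rewrite Rabs_left1 | rewrite Rabs_right]; lra.
  apply: (continuous_mult (fun t => f t + g t + Rabs (f t - g t)) (fun=> / 2)).
    apply: continuous_plus; first exact: continuous_plus.
    by apply: continuous_Rabs_comp; apply: continuous_minus.
  exact: continuous_const.
Qed.

Lemma continuous_Rmin (f g : R -> R) x : continuous f x -> continuous g x ->
  continuous (fun t => Rmin (f t) (g t)) x.
Proof.
  move=> fC gC; apply: (continuous_ext (fun t => - Rmax (- f t) (- g t))).
    by move=> t; rewrite Rmax_opp_Rmin Ropp_involutive.
  by apply: continuous_opp; apply: continuous_Rmax; apply: continuous_opp.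
Qed.

Definition cos2pi (x : R) : R := cos (2 * PI * x).

Lemma cos2pi_periodic : periodic cos2pi.
Proof.
  by move=> x; rewrite /cos2pi Rmult_plus_distr_l Rmult_1_r cos_plus cos_2PI sin_2PI; ring.
Qed.

Lemma cos2pi_minus1 x : cos2pi (x - 1) = cos2pi x.
Proof. by rewrite -(cos2pi_periodic (x - 1)) /Rminus Rplus_assoc Rplus_opp_l Rplus_0_r. Qed.

Lemma cos2pi_one_minus x : cos2pi (1 - x) = cos2pi x.
Proof.
  rewrite (_ : 1 - x = - x + 1); last ring.
  by rewrite cos2pi_periodic /cos2pi -Ropp_mult_distr_r cos_neg.
Qed.

Lemma cos2pi_bound x : -1 <= cos2pi x <= 1.
Proof. exact: COS_bound. Qed.

Lemma cos2pi_decreasing a b : 0 <= a -> a < b -> b <= 1 / 2 -> cos2pi b < cos2pi a.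
Proof.
  by move=> *; have := PI_RGT_0 => ?; rewrite /cos2pi; apply: cos_decreasing_1; nra.
Qed.

Lemma cos2pi_half_inj x y : 0 <= x < 1 -> 0 <= y < 1 ->
  cos2pi (x / 2) = cos2pi (y / 2) -> x = y.
Proof.
  move=> x01 y01 exy; case: (Rtotal_order x y) => [xy | [// | yx]].
  - by have := @cos2pi_decreasing (x / 2) (y / 2); lra.
  - by have := @cos2pi_decreasing (y / 2) (x / 2); lra.
Qed.

Lemma cos2pi_eq a b : cos2pi a = cos2pi b ->
  (exists k : Z, a - b = IZR k) \/ (exists k : Z, a + b = IZR k).
Proof.
  rewrite /cos2pi => eab; have := form2 (2 * PI * a) (2 * PI * b).
  rewrite eab Rminus_diag => prod0; have PI_gt0 := PI_RGT_0.
  have [sin0 | sin0] : sin (PI * (a - b)) = 0 \/ sin (PI * (a + b)) = 0.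
  - rewrite (_ : PI * (a - b) = (2 * PI * a - 2 * PI * b) / 2); last field.
    rewrite (_ : PI * (a + b) = (2 * PI * a + 2 * PI * b) / 2); last field.
    by case/esym/Rmult_integral: prod0 => [/Rmult_integral [] |]; auto; lra.
  - by left; have [k] := sin_eq_0_0 _ sin0; exists k; apply: (Rmult_eq_reg_l PI); lra.
  - by right; have [k] := sin_eq_0_0 _ sin0; exists k; apply: (Rmult_eq_reg_l PI); lra.
Qed.

Lemma cos2pi_eq_window w a b : w <= a < w + 1 -> w <= b < w + 1 -> a <> b ->
  cos2pi a = cos2pi b -> exists k : Z, a + b = IZR k.
Proof.
  move=> aw bw ab /cos2pi_eq [[k abk] | //]; exfalso.
  have /one_IZR_lt1 k0 : -1 < IZR k < 1 by rewrite -abk; lra.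
  by move: abk; rewrite k0 /=; lra.
Qed.

Lemma cos2pi_no_triple w a b c : w <= a < w + 1 -> w <= b < w + 1 -> w <= c < w + 1 ->
  a <> b -> a <> c -> b <> c -> cos2pi a = cos2pi b -> cos2pi a = cos2pi c -> False.
Proof.
  move=> aw bw cw ab ac bc eab eac.
  have [k1 abk] := cos2pi_eq_window aw bw ab eab.
  have [k2 ack] := cos2pi_eq_window aw cw ac eac.
  have bck : b - c = IZR (k1 - k2) by rewrite minus_IZR; lra.
  have /one_IZR_lt1 k12 : -1 < IZR (k1 - k2) < 1 by rewrite -bck; lra.
  by move: bck; rewrite k12 /=; lra.
Qed.

Lemma cos2pi_avoid c rho w : 0 < rho < 1 ->
  exists t, Rabs (t - c) < rho /\ cos2pi t <> cos2pi w.
Proof.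
  move=> rho01; apply: NNPP => noT.
  have eqw t : c <= t < c + rho -> cos2pi t = cos2pi w.
    move=> tc; apply: NNPP => ne; apply: noT; exists t; split=> //.
    by apply: Rabs_def1; lra.
  apply: (@cos2pi_no_triple c c (c + rho / 3) (c + 2 * rho / 3)); try lra.
  all: by rewrite !eqw; lra.
Qed.

Lemma cos2pi_lipschitz a b : Rabs (cos2pi a - cos2pi b) <= 2 * PI * Rabs (a - b).
Proof.
  have PI_gt0 := PI_RGT_0.
  apply: (bounded_variation cos2pi (fun t => - (2 * PI) * sin (2 * PI * t))) => t _.
  split; first by rewrite /cos2pi; auto_derive; first done; ring.
  rewrite Rabs_mult Rabs_Ropp Rabs_right; last lra.
  have : Rabs (sin (2 * PI * t)) <= 1 by apply: Rabs_le; apply: SIN_bound.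
  nra.
Qed.

(** * Height profiles through prescribed points *)

Lemma list_pos_lower_bound {A : Type} (l : list A) (P : A -> Prop) (f : A -> R) :
  (forall a, List.In a l -> P a -> 0 < f a) ->
  exists2 e, 0 < e & forall a, List.In a l -> P a -> e <= f a.
Proof.
  elim: l => [|a l IHl] fP; first by exists 1; [lra | move=> ? []].
  have [e e_gt0 eP] : exists2 e, 0 < e & forall b, List.In b l -> P b -> e <= f b.
    by apply: IHl => b bl; apply: fP; right.
  case: (classic (P a)) => [Pa | nPa]; last first.
    by exists e => // b [<- | bl] //; apply: eP.
  have fa_gt0 := fP a (or_introl erefl) Pa.
  exists (Rmin e (f a)); first exact: Rmin_glb_lt.
  move=> b [<- | bl] Pb; first exact: Rmin_r.
  by apply: Rle_trans (eP b bl Pb); apply: Rmin_l.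
Qed.

Lemma list_upper_bound {A : Type} (l : list A) (P : A -> Prop) (f : A -> R) :
  exists2 M, 0 <= M & forall a, List.In a l -> P a -> f a <= M.
Proof.
  elim: l => [|a l [M M_ge0 fM]]; first by exists 0; [lra | move=> ? []].
  exists (Rmax M (f a)); first exact: Rle_trans M_ge0 (Rmax_l _ _).
  move=> b [<- | bl] Pb; first exact: Rmax_r.
  exact: Rle_trans (fM b bl Pb) (Rmax_l _ _).
Qed.

Lemma small_positive a b : 0 < a -> 0 < b -> exists2 t, 0 < t < 1 & t <= a /\ t <= b.
Proof.
  move=> a_gt0 b_gt0; exists (Rmin (Rmin a b) (1 / 2)).
    split; last by apply: Rle_lt_trans (Rmin_r _ _) _; lra.
    by apply: Rmin_glb_lt; [apply: Rmin_glb_lt |]; lra.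
  have := Rmin_l (Rmin a b) (1 / 2); have := Rmin_l a b; have := Rmin_r a b; lra.
Qed.

Definition ramp (M : R) (n : R * R) (t : R) : R := Rmin n.2 (n.2 + M * (t - n.1)).

Definition ramp_max (M : R) (n0 : R * R) (l : list (R * R)) (t : R) : R :=
  foldr (fun n acc => Rmax (ramp M n t) acc) (ramp M n0 t) l.

Lemma ramp_max_ge M n0 l t n : List.In n (n0 :: l) -> ramp M n t <= ramp_max M n0 l t.
Proof.
  elim: l => [|a l IHl] /= nl; first by case: nl => [<- | []]; apply: Rle_refl.
  case: nl => [n0n | [<- | nl]].
  - by apply: Rle_trans (IHl _) (Rmax_r _ _); left.
  - exact: Rmax_l.
  - by apply: Rle_trans (IHl _) (Rmax_r _ _); right.
Qed.

Lemma ramp_max_le M n0 l t B : (forall n, List.In n (n0 :: l) -> ramp M n t <= B) ->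
  ramp_max M n0 l t <= B.
Proof.
  elim: l => [|a l IHl] /= nB; first by apply: nB; left.
  apply: Rmax_lub; first by apply: nB; right; left.
  by apply: IHl => n [<- | nl]; apply: nB; [left | right; right].
Qed.

Lemma ramp_max_nondecreasing M n0 l s t : 0 <= M -> s <= t ->
  ramp_max M n0 l s <= ramp_max M n0 l t.
Proof.
  move=> M_ge0 st.
  have rampM n : ramp M n s <= ramp M n t.
    apply: Rmin_glb; first exact: Rmin_l.
    apply: Rle_trans (Rmin_r _ _) _.
    by apply: Rplus_le_compat_l; apply: Rmult_le_compat_l; lra.
  by elim: l => [|a l IHl] //=; apply: Rmax_lub; [apply: Rle_trans (rampM a) (Rmax_l _ _) |
    apply: Rle_trans IHl (Rmax_r _ _)].
Qed.

Lemma ramp_max_continuous M n0 l t : continuous (ramp_max M n0 l) t.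
Proof.
  have rampC n : continuous (ramp M n) t.
    apply: (@continuous_Rmin (fun=> n.2)); first exact: continuous_const.
    apply: continuous_plus; first exact: continuous_const.
    apply: continuous_mult; first exact: continuous_const.
    by apply: continuous_minus; [apply: continuous_id | apply: continuous_const].
  elim: l => [|a l IHl] /=; first exact: rampC.
  exact: (@continuous_Rmax (ramp M a)).
Qed.

Lemma ramp_max_node M n0 l y v : List.In (y, v) (n0 :: l) ->
  (forall z w, List.In (z, w) (n0 :: l) -> (z <= y -> w <= v) /\ (y < z -> w - v <= M * (z - y))) ->
  ramp_max M n0 l y = v.
Proof.
  move=> yv_in nodes; apply: Rle_antisym.
    apply: ramp_max_le => -[z w] /nodes [zy yz]; rewrite /ramp /=.
    case: (Rle_or_lt z y) => [/zy | /yz] ?.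
      by apply: Rle_trans (Rmin_l _ _) _.
    by apply: Rle_trans (Rmin_r _ _) _; lra.
  apply: Rle_trans (ramp_max_ge M y yv_in); rewrite /ramp /= Rminus_diag Rmult_0_r Rplus_0_r.
  by rewrite Rmin_left; lra.
Qed.

(* The maximum of the ramps of slope [M] through the nodes passes through every node as
   soon as [M] exceeds all the slopes between nodes. *)
Lemma nondecreasing_interpolant (n0 : R * R) (l : list (R * R)) :
  (forall y v z w, List.In (y, v) (n0 :: l) -> List.In (z, w) (n0 :: l) -> z <= y -> w <= v) ->
  exists F : R -> R, (forall t, continuous F t) /\ (forall s t, s <= t -> F s <= F t) /\
    forall y v, List.In (y, v) (n0 :: l) -> F y = v.
Proof.
  move=> mono.
  have [M M_ge0 slopeM] := list_upper_bound (List.list_prod (n0 :: l) (n0 :: l))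
    (fun p => p.1.1 < p.2.1) (fun p => (p.2.2 - p.1.2) / (p.2.1 - p.1.1)).
  exists (ramp_max M n0 l); split; first exact: ramp_max_continuous.
  split; first by move=> s t; apply: ramp_max_nondecreasing.
  move=> y v yv_in; apply: ramp_max_node => // z w zw_in; split; first exact: mono.
  move=> yz; have := slopeM ((y, v), (z, w)) (List.in_prod _ _ _ _ yv_in zw_in) yz.
  move/(Rmult_le_compat_r (z - y)); rewrite /= /Rdiv Rmult_assoc Rinv_l; lra.
Qed.

Lemma increasing_slack (X : list R) (u : R -> R) :
  List.In 0 X -> (forall x, List.In x X -> 0 <= x < 1) ->
  (forall x y, List.In x X -> List.In y X -> x < y -> u x < u y < u x + 1) ->
  exists eps, [/\ 0 < eps,
    forall x y, List.In x X -> List.In y X -> x < y -> eps <= u y - u x &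
    forall x, List.In x X -> eps <= u 0 + 1 - u x].
Proof.
  move=> X0 X01 uX.
  have [e1 e1_gt0 e1P] : exists2 e, 0 < e &
      forall p, List.In p (List.list_prod X X) -> p.1 < p.2 -> e <= u p.2 - u p.1.
    apply: (@list_pos_lower_bound _ _ (fun p => p.1 < p.2) (fun p => u p.2 - u p.1)).
    by move=> [x y] /List.in_prod_iff [xX yX] /= xy; have := uX x y xX yX xy; lra.
  have [e2 e2_gt0 e2P] : exists2 e, 0 < e & forall x, List.In x X -> True -> e <= u 0 + 1 - u x.
    apply: (@list_pos_lower_bound _ _ (fun=> True) (fun x => u 0 + 1 - u x)) => x xX _.
    case: (Rle_or_lt x 0) => [x0 | x_gt0]; last by have := uX 0 x X0 xX x_gt0; lra.
    have -> : x = 0 by have := X01 x xX; lra.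
    lra.
  have [eps eps01 [eps_e1 eps_e2]] := small_positive e1_gt0 e2_gt0.
  exists eps; split; first lra.
  - by move=> x y xX yX xy; have := e1P (x, y) (List.in_prod _ _ _ _ xX yX) xy; rewrite /=; lra.
  - by move=> x xX; have := e2P x xX I; lra.
Qed.

Lemma increasing_interpolant (X : list R) (u : R -> R) :
  List.In 0 X -> (forall x, List.In x X -> 0 <= x < 1) ->
  (forall x y, List.In x X -> List.In y X -> x < y -> u x < u y < u x + 1) ->
  exists Psi : R -> R, (forall t, continuous Psi t) /\ (forall s t, s < t -> Psi s < Psi t) /\
    (forall x, List.In x X -> Psi x = u x) /\ Psi 1 = u 0 + 1.
Proof.
  move=> X0 X01 uX; have [eps [eps_gt0 slack_pairs slack_top]] := increasing_slack X0 X01 uX.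
  (* Interpolate the data tilted by [- eps * x], then add [eps * t] back. *)
  pose n0 := (1, u 0 + 1 - eps).
  pose l := List.map (fun x => (x, u x - eps * x)) X.
  have nodeP y v : List.In (y, v) (n0 :: l) ->
      y = 1 /\ v = u 0 + 1 - eps \/ List.In y X /\ v = u y - eps * y.
    case=> [[<- <-] | /List.in_map_iff [x [[<- <-] xX]]]; [left | right]; by [].
  case: (@nondecreasing_interpolant n0 l) =>
      [y v z w /nodeP yv /nodeP zw zy | F [F_cont [F_mono F_nodes]]].
  { move: zy; case: yv zw => [[-> ->] | [yX ->]] [[-> ->] | [zX ->]] zy; try lra.
    - by have := slack_top z zX; have := X01 z zX; nra.
    - by have := X01 y yX; lra.
    - case: (Rle_lt_or_eq_dec z y zy) => [z_lt_y | <-]; last lra.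
      have := slack_pairs z y zX yX z_lt_y.
      by have := X01 z zX; have := X01 y yX; nra. }
  exists (fun t => eps * t + F t); split.
    by move=> t; apply: continuous_plus; [apply: continuous_mult;
      [apply: continuous_const | apply: continuous_id] | apply: F_cont].
  split; first by move=> s t st; have := F_mono s t (Rlt_le _ _ st); nra.
  split; last by rewrite (F_nodes 1 (u 0 + 1 - eps)); [ring | left].
  move=> x xX; rewrite (F_nodes x (u x - eps * x)); first ring.
  by right; apply/List.in_map_iff; exists x.
Qed.

Definition at_most_two_to_one (f : R -> R) : Prop :=
  forall s t u, in01 s -> in01 t -> in01 u -> s <> t -> s <> u -> t <> u ->
    f s = f t -> f t = f u -> False.

Lemma cos2pi_lift_continuous (Psi : R -> R) :
  (forall t, continuous Psi t) -> Psi 1 = Psi 0 + 1 ->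
  forall t, continuous (fun t => cos2pi (Psi (frac_part t))) t.
Proof.
  move=> PsiC Psi1 t0; pose a := IZR (Int_part t0).
  have t0a : a <= t0 < a + 1 by have := base_Int_part t0; rewrite /a; lra.
  (* On [a - 1, a + 1], [Psi' (t - a)] and [Psi (frac_part t)] differ by an integer. *)
  pose Psi' s := Psi (Rmax s 0) + Psi (Rmin s 0 + 1) - Psi 1.
  apply: (@continuous_ext_loc _ _ _ (fun t => cos2pi (Psi' (t - a)))).
    apply: (@locally_between _ (a - 1) (a + 1)); first lra.
    move=> t ta; case: (Rle_or_lt a t) => [a_le_t | t_lt_a].
      rewrite (@frac_part_of t (Int_part t0)) -/a; last lra.
      by rewrite /Psi' Rmax_left ?Rmin_right ?Rplus_0_l; try lra; congr (cos2pi _); ring.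
    have -> : frac_part t = t - a + 1.
      rewrite (@frac_part_of t (Int_part t0 - 1)) minus_IZR -/a; first ring.
      lra.
    rewrite /Psi' Rmax_right ?Rmin_left; try lra.
    by rewrite Psi1 -[in RHS]cos2pi_minus1; congr (cos2pi _); ring.
  rewrite /cos2pi; apply: continuous_cos_comp.
  apply: continuous_mult; first exact: continuous_const.
  apply: (@continuous_comp _ _ _ (fun t => t - a) Psi').
    by apply: continuous_minus; [apply: continuous_id | apply: continuous_const].
  apply: continuous_minus; last exact: continuous_const.
  apply: continuous_plus; apply: continuous_comp (PsiC _).
    by apply: (@continuous_Rmax (fun s => s)); [apply: continuous_id | apply: continuous_const].
  apply: continuous_plus; last exact: continuous_const.
  by apply: (@continuous_Rmin (fun s => s)); [apply: continuous_id | apply: continuous_const].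
Qed.

Lemma cos2pi_lift_two_to_one (Psi : R -> R) :
  (forall s t, s < t -> Psi s < Psi t) -> Psi 1 = Psi 0 + 1 ->
  at_most_two_to_one (fun t => cos2pi (Psi (frac_part t))).
Proof.
  move=> PsiI Psi1 s t u s01 t01 u01 st su tu; rewrite !frac_part_id // => est etu.
  have win x : in01 x -> Psi 0 <= Psi x < Psi 0 + 1.
    move=> [x_ge0 x_lt1]; rewrite -Psi1; have := PsiI x 1 x_lt1.
    by case: (Rle_lt_or_eq_dec 0 x x_ge0) => [/PsiI | <-]; lra.
  have inj x y : x <> y -> Psi x <> Psi y.
    by move=> xy; case: (Rtotal_order x y) => [/PsiI | [// | /PsiI]]; lra.
  exact: (cos2pi_no_triple (win s s01) (win t t01) (win u u01) (inj _ _ st) (inj _ _ su)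
    (inj _ _ tu) est (etrans est etu)).
Qed.

Lemma height_profile_exists (X : list R) (u : R -> R) :
  List.In 0 X -> (forall x, List.In x X -> 0 <= x < 1) ->
  (forall x y, List.In x X -> List.In y X -> x < y -> u x < u y < u x + 1) ->
  exists G : R -> R, periodic G /\ (forall t, continuous G t) /\
    (forall x, List.In x X -> G x = cos2pi (u x)) /\ (forall t, -1 <= G t <= 1) /\
    at_most_two_to_one G.
Proof.
  move=> X0 X01 uX; have [Psi [PsiC [PsiI [PsiX Psi1]]]] := increasing_interpolant X0 X01 uX.
  have Psi01 : Psi 1 = Psi 0 + 1 by rewrite Psi1 PsiX.
  exists (fun t => cos2pi (Psi (frac_part t))); split.
    by move=> t; rewrite frac_part_periodic.
  split; first exact: cos2pi_lift_continuous.
  split; first by move=> x xX; rewrite frac_part_id ?PsiX //; apply: X01.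
  split; first by move=> t; apply: cos2pi_bound.
  exact: cos2pi_lift_two_to_one.
Qed.

(** * Unimodality of profiles taking each value at most twice *)

Lemma two_to_one_window f : periodic f -> at_most_two_to_one f ->
  forall w a b c, w <= a < w + 1 -> w <= b < w + 1 -> w <= c < w + 1 ->
    a <> b -> a <> c -> b <> c -> f a = f b -> f b = f c -> False.
Proof.
  move=> fP f2 w a b c aw bw cw ab ac bc.
  rewrite -(periodic_frac_part fP a) -(periodic_frac_part fP b) -(periodic_frac_part fP c).
  apply: f2; try exact: frac_part_bound.
  - by move/(frac_part_inj_window aw bw).
  - by move/(frac_part_inj_window aw cw).
  - by move/(frac_part_inj_window bw cw).
Qed.

Section MaxToMin.

Variables (f : R -> R) (P Q : R).
Hypothesis f_cont : forall x, continuous f x.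
Hypothesis f_two_to_one : forall a b c, P <= a < P + 1 -> P <= b < P + 1 -> P <= c < P + 1 ->
  a <> b -> a <> c -> b <> c -> f a = f b -> f b = f c -> False.
Hypothesis PQ : P < Q < P + 1.
Hypothesis f_max : forall t, f t <= f P.
Hypothesis f_min : forall t, f Q <= f t.

(* A rise [f a < f b] between the maximum and the minimum would make the level
   halfway between [f a] and [f b] be taken before [a], between [a] and [b], and after [b]. *)
Lemma max_to_min_no_rise a b : P <= a -> a < b -> b <= Q -> f a < f b -> False.
Proof.
  move=> Pa ab bQ fab; pose L := (f a + f b) / 2.
  have := f_max b; have := f_min a => fQa fbP.
  have [c1 c1_in fc1] : exists2 c, P <= c <= a & f c = L.
    by apply: ivt_interval => //; rewrite /L; lra.
  have [c2 c2_in fc2] : exists2 c, a <= c <= b & f c = L.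
    by apply: ivt_interval => //; rewrite /L; lra.
  have [c3 c3_in fc3] : exists2 c, b <= c <= Q & f c = L.
    by apply: ivt_interval => //; rewrite /L; lra.
  have c1a : c1 <> a by move=> e; move: fc1; rewrite e /L; lra.
  have c2a : c2 <> a by move=> e; move: fc2; rewrite e /L; lra.
  have c2b : c2 <> b by move=> e; move: fc2; rewrite e /L; lra.
  have c3b : c3 <> b by move=> e; move: fc3; rewrite e /L; lra.
  by apply: (@f_two_to_one c1 c2 c3); lra.
Qed.

Lemma max_to_min_decreasing a b : P <= a -> a < b -> b <= Q -> f b < f a.
Proof.
  move=> Pa ab bQ; case: (Rtotal_order (f b) (f a)) => [// | [fab | fab]]; exfalso; last first.
    exact: (max_to_min_no_rise Pa ab bQ).
  have := Rtotal_order (f ((a + b) / 2)) (f a); case=> [fca | [fca | fca]].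
  - by apply: (@max_to_min_no_rise ((a + b) / 2) b); lra.
  - by apply: (@f_two_to_one a ((a + b) / 2) b); lra.
  - by apply: (@max_to_min_no_rise a ((a + b) / 2)); lra.
Qed.

End MaxToMin.

Lemma periodic_max_min f : (forall t, continuous f t) -> periodic f -> at_most_two_to_one f ->
  exists p q, 0 <= p < 1 /\ p < q < p + 1 /\ (forall t, f t <= f p) /\ (forall t, f q <= f t).
Proof.
  move=> fC fP f2; have fCpt t : continuity_pt f t by apply/continuity_pt_filterlim; apply: fC.
  have [p' [p'_max p'01]] := @continuity_ab_maj f 0 1 Rle_0_1 (fun t _ => fCpt t).
  have [q' [q'_min q'01]] := @continuity_ab_min f 0 1 Rle_0_1 (fun t _ => fCpt t).
  have fp t : f t <= f (frac_part p').
    by rewrite -(periodic_frac_part fP t) (periodic_frac_part fP p'); apply: p'_max;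
      have := frac_part_bound t; lra.
  have fq t : f (frac_part q') <= f t.
    by rewrite -(periodic_frac_part fP t) (periodic_frac_part fP q'); apply: q'_min;
      have := frac_part_bound t; lra.
  have fqp : f (frac_part q') < f (frac_part p').
    case: (Rle_lt_or_eq_dec _ _ (fp (frac_part q'))) => // fqp; exfalso.
    apply: (@f2 0 (1 / 3) (2 / 3)); rewrite /in01; try lra.
    - by have := fp 0; have := fq 0; have := fp (1 / 3); have := fq (1 / 3); lra.
    - by have := fp (2 / 3); have := fq (2 / 3); have := fp (1 / 3); have := fq (1 / 3); lra.
  have := frac_part_bound p'; have := frac_part_bound q' => q01 p01.
  have pq : frac_part q' <> frac_part p' by move=> e; move: fqp; rewrite e; lra.
  exists (frac_part p'); case: (Rlt_le_dec (frac_part p') (frac_part q')) => [p_lt_q | q_le_p].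
    by exists (frac_part q'); split; [lra | split; [lra | split]].
  exists (frac_part q' + 1); split; [lra | split; [lra | split=> // t]].
  by rewrite fP.
Qed.

Lemma unimodal_monotone f p q :
  (forall t, continuous f t) -> periodic f -> at_most_two_to_one f ->
  p < q < p + 1 -> (forall t, f t <= f p) -> (forall t, f q <= f t) ->
  (forall s t, p <= s -> s < t -> t <= q -> f t < f s) /\
  (forall s t, q <= s -> s < t -> t <= p + 1 -> f s < f t).
Proof.
  move=> fC fP f2 pq fp fq; have f2w := two_to_one_window fP f2.
  split=> [s t | s t qs st tp].
    by apply: max_to_min_decreasing => // a b c *; apply: (f2w p a b c).
  suff : - f t < - f s by lra.
  apply: (@max_to_min_decreasing (fun t => - f t) q (p + 1)) => //; try lra.
  - by move=> x; apply: continuous_opp.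
  - by move=> a b c *; apply: (f2w q a b c) => //; lra.
  - by move=> x; have := fq x; lra.
  - by move=> x; rewrite fP; have := fp x; lra.
Qed.

Lemma unimodal_arc_positions f p q : periodic f ->
  p < q < p + 1 -> (forall t, f t <= f p) -> (forall t, f q <= f t) ->
  (forall s t, p <= s -> s < t -> t <= q -> f t < f s) ->
  (forall s t, q <= s -> s < t -> t <= p + 1 -> f s < f t) ->
  exists V : R -> R,
    (forall s t, p <= s -> s < t -> t < p + 1 -> V s < V t) /\
    (forall s, p <= s < p + 1 -> 0 <= V s < 1) /\
    (forall s t, f s < f t -> cos2pi (V s) < cos2pi (V t)).
Proof.
  move=> fP pq fp fq decr incr.
  have fqp : f q < f p by apply: decr; lra.
  (* [V] runs through [0, 1/2] on the descending arc and through [1/2, 1) on the ascending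
     one, so that [cos2pi V] is an increasing function of the height [f]. *)
  pose g w := (f p - w) / (2 * (f p - f q)).
  have g_decr w w' : w < w' -> g w' < g w.
    by move=> ww'; rewrite /g /Rdiv; apply: Rmult_lt_compat_r; [apply: Rinv_0_lt_compat |]; lra.
  have g_range t : 0 <= g (f t) <= 1 / 2.
    have := fp t; have := fq t; rewrite /g => ? ?.
    split; first by apply: Rdiv_le_0_compat; lra.
    by apply/Rle_div_l; lra.
  have g_q : g (f q) = 1 / 2 by rewrite /g; field; lra.
  have g_p : g (f p) = 0 by rewrite /g Rminus_diag /Rdiv Rmult_0_l.
  exists (fun s => if Rle_dec s q then g (f s) else 1 - g (f s)).
  split; [ | split].
  - move=> s t ps st tp; case: Rle_dec => sq /=; case: Rle_dec => tq /=.
    + by apply: g_decr; apply: decr.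
    + have := g_range s; have := g_decr _ _ (incr q t (Rle_refl _) ltac:(lra) ltac:(lra)).
      by rewrite g_q; lra.
    + lra.
    + by have := g_decr _ _ (incr s t ltac:(lra) st ltac:(lra)); lra.
  - move=> s sp; have := g_range s; case: Rle_dec => sq /=; first lra.
    have := g_decr _ _ (incr s (p + 1) ltac:(lra) ltac:(lra) (Rle_refl _)).
    by rewrite fP g_p; lra.
  - move=> s t fst; have := g_range s; have := g_range t; have := g_decr _ _ fst.
    by do 2 case: Rle_dec => _ /=; rewrite ?cos2pi_one_minus => *; apply: cos2pi_decreasing; lra.
Qed.

Lemma unimodal_positions f : (forall t, continuous f t) -> periodic f -> at_most_two_to_one f ->
  exists U : R -> R,
    (forall x y, 0 <= x -> x < y -> y < 1 -> U x < U y < U x + 1) /\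
    (forall s t, f s < f t -> cos2pi (U s) < cos2pi (U t)).
Proof.
  move=> fC fP f2; have [p [q [p01 [pq [fp fq]]]]] := periodic_max_min fC fP f2.
  have [decr incr] := unimodal_monotone fC fP f2 pq fp fq.
  have [V [V_incr [V_range V_cos]]] := unimodal_arc_positions fP pq fp fq decr incr.
  exists (fun x => if Rlt_dec x p then V (x + 1) - 1 else V x); split.
    move=> x y x_ge0 xy y_lt1.
    case: Rlt_dec => xp /=; case: Rlt_dec => yp /=.
    - by have := V_incr (x + 1) (y + 1); have := V_range (x + 1); have := V_range (y + 1); lra.
    - by have := V_incr y (x + 1); have := V_range (x + 1); have := V_range y; lra.
    - lra.
    - by have := V_incr x y; have := V_range x; have := V_range y; lra.
  have cos_lift x : cos2pi (if Rlt_dec x p then V (x + 1) - 1 else V x) =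
      cos2pi (V (if Rlt_dec x p then x + 1 else x)).
    by case: Rlt_dec => _ /=; rewrite ?cos2pi_minus1.
  have f_lift x : f (if Rlt_dec x p then x + 1 else x) = f x.
    by case: Rlt_dec => _ /=; rewrite ?fP.
  by move=> s t fst; rewrite !cos_lift; apply: V_cos; rewrite !f_lift.
Qed.

(** * Encoding vertically trivial states by positions *)

Definition Rltb (a b : R) : bool := if Rlt_dec a b then true else false.

Lemma RltbP a b : reflect (a < b) (Rltb a b).
Proof. by rewrite /Rltb; case: Rlt_dec => ab; constructor. Qed.

Lemma In_enum_ord n (i : 'I_n) : List.In i (enum 'I_n).
Proof.
  have : i \in enum 'I_n by rewrite mem_enum.
  elim: (enum 'I_n) => [|j s IHs] //.
  by rewrite in_cons => /orP [/eqP -> | /IHs]; [left | right].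
Qed.

Lemma component_heights_ordered m (h : 'I_m -> R -> R) :
  (forall i t, continuous (h i) t) -> (forall i, periodic (h i)) ->
  (forall i s j t, in01 s -> in01 t -> dparam i s j t -> h i s = h j t -> i = j) ->
  forall i j s t, i <> j -> h i s < h j t -> h i 0 < h j 0.
Proof.
  move=> hC hP h_sep i j s t ij hst.
  have sep x y : h i (frac_part x) <> h j (frac_part y).
    move=> e; apply: (ij (h_sep i _ j _ (frac_part_bound x) (frac_part_bound y) _ e)).
    by move=> [/ij].
  (* Otherwise [l |-> h i (l * s) - h j (l * t)] vanishes somewhere on [0, 1]. *)
  case: (Rlt_le_dec (h i 0) (h j 0)) => // hji; exfalso.
  have [l l01 hl] : exists2 l, 0 <= l <= 1 & h i (l * s) - h j (l * t) = 0.
    apply: (@ivt_interval (fun l => h i (l * s) - h j (l * t))).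
    all: rewrite ?Rmult_0_l ?Rmult_1_l; try lra.
    move=> l; apply: continuous_minus.
      by apply: (@continuous_comp _ _ _ (fun l => l * s)) (hC _ _);
        apply: continuous_mult; [apply: continuous_id | apply: continuous_const].
    by apply: (@continuous_comp _ _ _ (fun l => l * t)) (hC _ _);
      apply: continuous_mult; [apply: continuous_id | apply: continuous_const].
  by apply: (sep (l * s) (l * t)); rewrite !periodic_frac_part //; lra.
Qed.

Lemma ranking_perm m (w : 'I_m -> R) : injective w ->
  exists r : {perm 'I_m}, forall i j, (r j < r i)%N <-> w j < w i.
Proof.
  move=> w_inj; pose rank i := #|[set j | Rltb (w j) (w i)]|.
  have rank_lt i : (rank i < m)%N.
    have : [set j | Rltb (w j) (w i)] \subset [set~ i].
      by apply/subsetP => j; rewrite !inE => /RltbP ji; apply/eqP => e; move: ji; rewrite e; lra.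
    by rewrite /rank; move/subset_leq_card; rewrite cardsC1 card_ord; have := ltn_ord i; lia.
  have rank_mono i j : w j < w i -> (rank j < rank i)%N.
    move=> ji; apply: proper_card; apply/properP; split.
      by apply/subsetP => k; rewrite !inE => /RltbP kj; apply/RltbP; lra.
    by exists j; rewrite inE; apply/RltbP => //; lra.
  have rank_inj : injective (fun i => Ordinal (rank_lt i)).
    move=> i j /(congr1 val) /= e; apply: w_inj.
    by case: (Rtotal_order (w i) (w j)) => [/rank_mono | [// | /rank_mono]]; lia.
  exists (perm rank_inj) => i j; rewrite !permE /=; split; last exact: rank_mono.
  case: (Rtotal_order (w j) (w i)) => [// | [/w_inj -> | /rank_mono]]; lia.
Qed.

Lemma ltn_INR (a b : nat) : (a < b)%N -> INR a + 1 <= INR b.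
Proof. by move=> /ltP ab; have := le_INR _ _ ab; rewrite S_INR. Qed.

Lemma band_lt (a b : nat) x y : (a < b)%N -> -1 <= x <= 1 -> -1 <= y <= 1 ->
  3 * INR a + x < 3 * INR b + y.
Proof. by move=> /ltn_INR; lra. Qed.

Lemma banded_vertically_trivial m (r : {perm 'I_m}) (G : 'I_m -> R -> R) :
  (forall i t, -1 <= G i t <= 1) -> (forall i, at_most_two_to_one (G i)) ->
  vertically_trivial_link (fun i t => 3 * INR (r i) + G i t).
Proof.
  move=> G_bound G2.
  have same i s j t : 3 * INR (r i) + G i s = 3 * INR (r j) + G j t -> i = j.
    move=> e; case: (ltngtP (r i) (r j)) => [ij | ji | rij].
    - by have := band_lt ij (G_bound i s) (G_bound j t); lra.
    - by have := band_lt ji (G_bound j t) (G_bound i s); lra.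
    - by apply: (@perm_inj _ r); apply: val_inj.
  split=> [i s j t _ _ _ /same // | i s j t l u s01 t01 u01 st su tu est etu].
  move: (same _ _ _ _ est) (same _ _ _ _ etu) => ij jl; subst j l.
  apply: (G2 i s t u) => //; try lra.
  - by move=> e; apply: st; split.
  - by move=> e; apply: su; split.
  - by move=> e; apply: tu; split.
Qed.

Section Encoding.

Variables (m : nat) (cr : seq (crossing m)).

Hypothesis cr_params :
  forall k : 'I_(size cr), in01 (cr_s1 (crossing_of k)) /\ in01 (cr_s2 (crossing_of k)).

(* The parameter 0 is marked on every component; it anchors the height profile. *)
Definition marked_points : list ('I_m * R) :=
  List.map (fun i => (i, 0)) (enum 'I_m) ++
  List.map (fun k : 'I_(size cr) => (cr_c1 (crossing_of k), cr_s1 (crossing_of k)))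
    (enum 'I_(size cr)) ++
  List.map (fun k : 'I_(size cr) => (cr_c2 (crossing_of k), cr_s2 (crossing_of k)))
    (enum 'I_(size cr)).

Lemma marked_origin i : List.In (i, 0) marked_points.
Proof.
  by apply/List.in_or_app; left; apply/List.in_map_iff; exists i; split=> //; apply: In_enum_ord.
Qed.

Lemma marked_c1 (k : 'I_(size cr)) :
  List.In (cr_c1 (crossing_of k), cr_s1 (crossing_of k)) marked_points.
Proof.
  apply/List.in_or_app; right; apply/List.in_or_app; left.
  by apply/List.in_map_iff; exists k; split=> //; apply: In_enum_ord.
Qed.

Lemma marked_c2 (k : 'I_(size cr)) :
  List.In (cr_c2 (crossing_of k), cr_s2 (crossing_of k)) marked_points.
Proof.
  apply/List.in_or_app; right; apply/List.in_or_app; right.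
  by apply/List.in_map_iff; exists k; split=> //; apply: In_enum_ord.
Qed.

Lemma marked_in01 i x : List.In (i, x) marked_points -> 0 <= x < 1.
Proof.
  move=> /List.in_app_iff [/List.in_map_iff [j [[_ <-] _]] | /List.in_app_iff ix]; first lra.
  by case: ix => /List.in_map_iff [k [[_ <-] _]]; have [] := cr_params k.
Qed.

Definition marked_params (i : 'I_m) : list R :=
  List.map snd (List.filter (fun p => p.1 == i) marked_points).

Lemma In_marked_params i x : List.In x (marked_params i) <-> List.In (i, x) marked_points.
Proof.
  rewrite /marked_params List.in_map_iff; split=> [[[j y] [/= <-]] | ix].
    by case/List.filter_In => jy /= /eqP <-.
  by exists (i, x); split=> //; apply/List.filter_In; rewrite /= eqxx.
Qed.

(* At its marked parameter [x], component [i] of the link realizing [state_of r U] sits at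
   height [3 * r i + cos2pi (U i x)]. *)
Definition cyclic_positions (U : 'I_m -> R -> R) : Prop :=
  forall i x y, List.In (i, x) marked_points -> List.In (i, y) marked_points -> x < y ->
    U i x < U i y < U i x + 1.

Definition generic_positions (U : 'I_m -> R -> R) : Prop :=
  forall k : 'I_(size cr), cr_c1 (crossing_of k) = cr_c2 (crossing_of k) ->
    cos2pi (U (cr_c1 (crossing_of k)) (cr_s1 (crossing_of k))) <>
    cos2pi (U (cr_c1 (crossing_of k)) (cr_s2 (crossing_of k))).

Definition state_of (r : {perm 'I_m}) (U : 'I_m -> R -> R) : state cr :=
  [ffun k => let c := crossing_of k in
     if cr_c1 c == cr_c2 c
     then Rltb (cos2pi (U (cr_c1 c) (cr_s2 c))) (cos2pi (U (cr_c1 c) (cr_s1 c)))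
     else (r (cr_c2 c) < r (cr_c1 c))%N].

Lemma state_of_realized r U : cyclic_positions U -> generic_positions U ->
  exists h, realizes (state_of r U) h /\ vertically_trivial_link h /\
    forall i t, 3 * INR (r i) - 1 <= h i t <= 3 * INR (r i) + 1.
Proof.
  move=> U_cyc U_gen.
  have profile i : exists g : R -> R,
      periodic g /\ (forall t, continuous g t) /\
      (forall x, List.In x (marked_params i) -> g x = cos2pi (U i x)) /\
      (forall t, -1 <= g t <= 1) /\ at_most_two_to_one g.
    apply: height_profile_exists.
    - exact/In_marked_params/marked_origin.
    - by move=> x /In_marked_params /marked_in01.
    - by move=> x y /In_marked_params ix /In_marked_params iy; apply: U_cyc.
  have [G G_prof] := choice _ profile.
  have G_bound i : forall t, -1 <= G i t <= 1 by have [_ [_ [_ [bound _]]]] := G_prof i.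
  have G_node i x : List.In (i, x) marked_points -> G i x = cos2pi (U i x).
    by have [_ [_ [node _]]] := G_prof i; move/In_marked_params/node.
  exists (fun i t => 3 * INR (r i) + G i t); split; last first.
    split; last by move=> i t; have := G_bound i t; lra.
    by apply: banded_vertically_trivial => // i; have [_ [_ [_ [_ G2]]]] := G_prof i.
  split; first by move=> i t; have [-> _] := G_prof i.
  split.
    move=> i t; apply: continuous_plus; first exact: continuous_const.
    by have [_ [G_cont _]] := G_prof i.
  move=> k; rewrite ffunE /=.
  rewrite (G_node _ _ (marked_c1 k)) (G_node _ _ (marked_c2 k)).
  case: eqP => [c12 | c12].
    rewrite -c12; have := U_gen k c12; case: RltbP => /=; rewrite -?c12; lra.
  have r12 : (r (cr_c1 (crossing_of k)) : nat) <> r (cr_c2 (crossing_of k)).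
    by move=> /val_inj /perm_inj.
  case: ltngtP => [r21 | r12' | /esym //]; apply: band_lt => //; exact: cos2pi_bound.
Qed.

Lemma state_of_vertically_trivial r U : cyclic_positions U -> generic_positions U ->
  vertically_trivial_state (state_of r U).
Proof. by move=> U_cyc U_gen; have [h [? [? _]]] := state_of_realized r U_cyc U_gen; exists h. Qed.

Lemma vertically_trivial_positions D : vertically_trivial_state D ->
  exists r U, cyclic_positions U /\ generic_positions U /\ state_of r U = D.
Proof.
  move=> [h [[hP [hC h_cr]] [h_sep h_no3]]].
  have pos i : exists u : R -> R,
      (forall x y, 0 <= x -> x < y -> y < 1 -> u x < u y < u x + 1) /\
      (forall s t, h i s < h i t -> cos2pi (u s) < cos2pi (u t)).
    apply: unimodal_positions => // s t u s01 t01 u01 st su tu.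
    by apply: (h_no3 i s i t i u) => // -[].
  have [U U_spec] := choice _ pos.
  have [r r_spec] : exists r : {perm 'I_m}, forall i j, (r j < r i)%N <-> h j 0 < h i 0.
    apply: ranking_perm => i j hij; case: (eqVneq i j) => // ij.
    apply: (h_sep i 0 j 0 _ _ _ hij); rewrite /in01; try lra.
    by move=> [e _]; move: ij; rewrite e eqxx.
  have h_ord := component_heights_ordered hC hP h_sep.
  have U_cos k : cr_c1 (crossing_of k) = cr_c2 (crossing_of k) ->
      if D k then cos2pi (U (cr_c1 (crossing_of k)) (cr_s2 (crossing_of k))) <
                  cos2pi (U (cr_c1 (crossing_of k)) (cr_s1 (crossing_of k)))
      else cos2pi (U (cr_c1 (crossing_of k)) (cr_s1 (crossing_of k))) <
           cos2pi (U (cr_c1 (crossing_of k)) (cr_s2 (crossing_of k))).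
    by move=> c12; have := h_cr k; rewrite /= -c12; case: (D k); apply: (proj2 (U_spec _)).
  exists r, U; split; [ | split].
  - move=> i x y /marked_in01 [x_ge0 _] /marked_in01 [_ y_lt1] xy.
    exact: (proj1 (U_spec i)).
  - by move=> k c12; have := U_cos k c12; case: (D k); lra.
  apply/ffunP => k; rewrite ffunE /=; case: eqP => [c12 | c12].
    by have := U_cos k c12; case: (D k) => cos_k; apply/RltbP => //; lra.
  have := h_cr k; rewrite /=; case: (D k) => h_k.
    by apply/r_spec; apply: h_ord h_k => e; apply: c12.
  by apply/negP => /r_spec; have := h_ord _ _ _ _ c12 h_k; lra.
Qed.

End Encoding.

(** * Sliding positions: changes of self-crossings *)

Definition vt_step m (cr : seq (crossing m)) (S T : state cr) : Prop :=
  move S T /\ vertically_trivial_state T.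

Definition self_crossing_at m (cr : seq (crossing m)) (k : 'I_(size cr)) (i : 'I_m) (x : R) :=
  cr_c1 (crossing_of k) = i /\ cr_c2 (crossing_of k) = i /\
  (cr_s1 (crossing_of k) = x \/ cr_s2 (crossing_of k) = x).

Definition update m (W : 'I_m -> R -> R) (i : 'I_m) (x t : R) : 'I_m -> R -> R :=
  fun j y => if (j == i) && (if Req_dec_T y x then true else false) then t else W j y.

Lemma update_same m (W : 'I_m -> R -> R) i x t : update W i x t i x = t.
Proof. by rewrite /update eqxx; case: Req_dec_T. Qed.

Lemma update_other m (W : 'I_m -> R -> R) i x t j y :
  ~ (j = i /\ y = x) -> update W i x t j y = W j y.
Proof. by rewrite /update => jy; case: eqP => // ji; case: Req_dec_T => // yx; case: jy. Qed.

Lemma change_crossing_or_same m (cr : seq (crossing m)) (S T : state cr) k0 :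
  (forall k, k <> k0 -> T k = S k) -> T = S \/ T = change_crossing S k0.
Proof.
  move=> TS; case: (eqVneq (T k0) (S k0)) => [e | ne]; [left | right]; apply/ffunP => k.
    by case: (eqVneq k k0) => [-> | /eqP /TS].
  rewrite ffunE; case: eqP => [-> | /TS //].
  by move: ne; case: (T k0); case: (S k0).
Qed.

Definition interpolate m (U V : 'I_m -> R -> R) (l : R) : 'I_m -> R -> R :=
  fun i x => (1 - l) * U i x + l * V i x.

Section Interpolation.

Variables (m : nat) (cr : seq (crossing m)).

Hypothesis cr_params :
  forall k : 'I_(size cr), in01 (cr_s1 (crossing_of k)) /\ in01 (cr_s2 (crossing_of k)).
Hypothesis self_crossing_distinct : forall k : 'I_(size cr),
  cr_c1 (crossing_of k) = cr_c2 (crossing_of k) -> cr_s1 (crossing_of k) <> cr_s2 (crossing_of k).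
Hypothesis self_crossing_unique : forall (k k' : 'I_(size cr)) i x,
  self_crossing_at k i x -> self_crossing_at k' i x -> k = k'.

Notation marked := (marked_points cr).
Notation cyclic := (cyclic_positions cr).
Notation generic := (generic_positions cr).
Notation state_of := (state_of cr).
Notation vt_path := (clos_refl_trans _ (@vt_step m cr)).

Lemma state_of_update r W i x t :
  state_of r (update W i x t) = state_of r W \/
  exists k, is_self_crossing k /\ state_of r (update W i x t) = change_crossing (state_of r W) k.
Proof.
  have same k : ~ self_crossing_at k i x -> state_of r (update W i x t) k = state_of r W k.
    move=> not_at; rewrite !ffunE /=; case: eqP => // c12.
    by rewrite !update_other // => -[c1i sx]; apply: not_at; rewrite /self_crossing_at -c12; tauto.
  case: (classic (exists k0 : 'I_(size cr), self_crossing_at k0 i x)) => [[k0 at_k0] | none];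
    last first.
    by left; apply/ffunP => k; apply: same => at_k; apply: none; exists k.
  case: (@change_crossing_or_same _ _ (state_of r W) (state_of r (update W i x t)) k0).
  - by move=> k kk0; apply: same => at_k; apply: kk0; apply: self_crossing_unique at_k at_k0.
  - by left.
  - move=> e; right; exists k0; split=> //.
    by case: at_k0 => [c1 [c2 _]]; rewrite /is_self_crossing c1 c2.
Qed.

Lemma generic_update_near W i x c tau : 0 < tau < 1 -> generic W ->
  exists t, Rabs (t - c) < tau /\ generic (update W i x t).
Proof.
  move=> tau01 W_gen.
  have off t (k : 'I_(size cr)) :
      cr_c1 (crossing_of k) = cr_c2 (crossing_of k) -> ~ self_crossing_at k i x ->
      cos2pi (update W i x t (cr_c1 (crossing_of k)) (cr_s1 (crossing_of k))) <>
      cos2pi (update W i x t (cr_c1 (crossing_of k)) (cr_s2 (crossing_of k))).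
    move=> c12 not_at; rewrite !update_other; [exact: W_gen | move=> ? | move=> ?];
      by apply: not_at; rewrite /self_crossing_at -c12; tauto.
  case: (classic (exists k0 : 'I_(size cr), self_crossing_at k0 i x)) => [[k0 at_k0] | none];
    last first.
    exists c; split; first by rewrite Rminus_diag Rabs_R0; lra.
    by move=> k c12; apply: off => // at_k; apply: none; exists k.
  (* Only the height at the other preimage [y] of the self-crossing at [(i, x)] is to be avoided. *)
  pose y := if Req_dec_T (cr_s1 (crossing_of k0)) x then cr_s2 (crossing_of k0)
            else cr_s1 (crossing_of k0).
  have [t [tc ty]] := cos2pi_avoid c (W i y) tau01.
  exists t; split=> // k c12.
  case: (classic (self_crossing_at k i x)) => [at_k | ]; last exact: off.
  have kk0 := self_crossing_unique at_k at_k0; subst k.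
  have s12 := self_crossing_distinct c12.
  case: at_k0 => [c1i [_ s_x]]; rewrite c1i; move: ty; rewrite /y.
  case: Req_dec_T => [s1x | s1x] ty.
  - have s2x : cr_s2 (crossing_of k0) <> x by move=> e; apply: s12; rewrite s1x e.
    by rewrite s1x update_same update_other; [exact: ty | case].
  - have s2x : cr_s2 (crossing_of k0) = x by case: s_x.
    rewrite s2x update_same update_other; last by case.
    by move=> e; apply: ty; rewrite e.
Qed.

Lemma update_path r W i x t : cyclic (update W i x t) -> generic (update W i x t) ->
  vt_path (state_of r W) (state_of r (update W i x t)).
Proof.
  move=> cyc gen; case: (state_of_update r W i x t) => [-> | [k [k_self e]]]; first exact: rt_refl.
  apply: rt_step; split; last exact: state_of_vertically_trivial.
  by left; exists k.
Qed.

Section Round.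

Variables (r : {perm 'I_m}) (A B : 'I_m -> R -> R) (tau : R).
Hypothesis tau01 : 0 < tau < 1.

Definition near_either (W : 'I_m -> R -> R) : Prop := forall i x, List.In (i, x) marked ->
  Rabs (W i x - A i x) < tau \/ Rabs (W i x - B i x) < tau.

Hypothesis near_either_cyclic : forall W, near_either W -> cyclic W.

Lemma round_toward (Q : list ('I_m * R)) W :
  (forall q, List.In q Q -> List.In q marked) -> generic W -> near_either W ->
  exists W', vt_path (state_of r W) (state_of r W') /\ generic W' /\ near_either W' /\
    forall i x, List.In (i, x) Q -> Rabs (W' i x - B i x) < tau.
Proof.
  elim: Q => [|[i x] Q IHQ] QP W_gen W_near.
    by exists W; split; [apply: rt_refl | split; [| split]].
  have [W1 [path1 [W1_gen [W1_near W1_Q]]]] := IHQ (fun q qQ => QP q (or_intror qQ)) W_gen W_near.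
  have [t [tB W'_gen]] := generic_update_near i x (B i x) tau01 W1_gen.
  have W'_near : near_either (update W1 i x t).
    move=> j y jy; case: (classic (j = i /\ y = x)) => [[-> ->] | jyx].
      by rewrite update_same; right.
    by rewrite update_other //; apply: W1_near.
  exists (update W1 i x t); split.
    by apply: rt_trans path1 _; apply: update_path => //; apply: near_either_cyclic.
  split=> //; split=> // j y [[<- <-] | jyQ]; first by rewrite update_same.
  case: (classic (j = i /\ y = x)) => [[-> ->] | jyx]; first by rewrite update_same.
  by rewrite update_other //; apply: W1_Q.
Qed.

End Round.

Definition cyclic_with_margin (e : R) (U : 'I_m -> R -> R) : Prop :=
  forall i x y, List.In (i, x) marked -> List.In (i, y) marked -> x < y ->
    e <= U i y - U i x <= 1 - e.

Lemma cyclic_margin U : cyclic U -> exists2 e, 0 < e & cyclic_with_margin e U.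
Proof.
  move=> U_cyc; pose d (p : ('I_m * R) * ('I_m * R)) := U p.1.1 p.2.2 - U p.1.1 p.1.2.
  have [e e_gt0 eP] : exists2 e, 0 < e & forall p, List.In p (List.list_prod marked marked) ->
      p.1.1 = p.2.1 /\ p.1.2 < p.2.2 -> e <= Rmin (d p) (1 - d p).
    apply: (@list_pos_lower_bound _ _ (fun p => p.1.1 = p.2.1 /\ p.1.2 < p.2.2)
      (fun p => Rmin (d p) (1 - d p))) => -[[i x] [j y]] /List.in_prod_iff [ix jy] /= [ij xy].
    move: jy; rewrite -ij => iy; have := U_cyc i x y ix iy xy.
    by rewrite /d /= => ?; apply: Rmin_glb_lt; lra.
  exists e => // i x y ix iy xy.
  have := eP ((i, x), (i, y)) (List.in_prod _ _ _ _ ix iy) (conj erefl xy); rewrite /d /=.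
  by have := Rmin_l (U i y - U i x) (1 - (U i y - U i x));
    have := Rmin_r (U i y - U i x) (1 - (U i y - U i x)); lra.
Qed.

Lemma cyclic_with_margin_le e e' U : e' <= e -> cyclic_with_margin e U -> cyclic_with_margin e' U.
Proof. by move=> e'e U_e i x y ix iy xy; have := U_e i x y ix iy xy; lra. Qed.

Lemma cyclic_with_margin_interpolate e U V l : 0 <= l <= 1 ->
  cyclic_with_margin e U -> cyclic_with_margin e V -> cyclic_with_margin e (interpolate U V l).
Proof.
  move=> l01 U_e V_e i x y ix iy xy; rewrite /interpolate.
  have := U_e i x y ix iy xy; have := V_e i x y ix iy xy => Vxy Uxy.
  have := Rmult_le_compat_l (1 - l) _ _ ltac:(lra) (proj1 Uxy).
  have := Rmult_le_compat_l (1 - l) _ _ ltac:(lra) (proj2 Uxy).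
  have := Rmult_le_compat_l l _ _ (proj1 l01) (proj1 Vxy).
  have := Rmult_le_compat_l l _ _ (proj1 l01) (proj2 Vxy).
  lra.
Qed.

Lemma cyclic_near_margin e A W : cyclic_with_margin e A ->
  (forall i x, List.In (i, x) marked -> Rabs (W i x - A i x) < e / 2) -> cyclic W.
Proof.
  move=> A_e WA i x y ix iy xy; have := A_e i x y ix iy xy.
  by move: (WA i x ix) (WA i y iy) => /Rabs_def2 ? /Rabs_def2 ?; lra.
Qed.

Lemma generic_gap V : generic V -> exists2 g, 0 < g & forall k : 'I_(size cr),
  cr_c1 (crossing_of k) = cr_c2 (crossing_of k) ->
  g <= Rabs (cos2pi (V (cr_c1 (crossing_of k)) (cr_s1 (crossing_of k))) -
             cos2pi (V (cr_c1 (crossing_of k)) (cr_s2 (crossing_of k)))).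
Proof.
  move=> V_gen; case: (@list_pos_lower_bound _ (enum 'I_(size cr))
    (fun k => cr_c1 (crossing_of k) = cr_c2 (crossing_of k))
    (fun k => Rabs (cos2pi (V (cr_c1 (crossing_of k)) (cr_s1 (crossing_of k))) -
                    cos2pi (V (cr_c1 (crossing_of k)) (cr_s2 (crossing_of k)))))) =>
    [k _ c12 | g g_gt0 gP]; last by exists g => // k; apply: gP; apply: In_enum_ord.
  by apply: Rabs_pos_lt => e; apply: (V_gen k c12); lra.
Qed.

Lemma state_of_stable r V W g : 0 < g ->
  (forall k : 'I_(size cr), cr_c1 (crossing_of k) = cr_c2 (crossing_of k) ->
    g <= Rabs (cos2pi (V (cr_c1 (crossing_of k)) (cr_s1 (crossing_of k))) -
               cos2pi (V (cr_c1 (crossing_of k)) (cr_s2 (crossing_of k))))) ->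
  (forall i x, List.In (i, x) marked -> Rabs (W i x - V i x) < g / (4 * PI)) ->
  state_of r W = state_of r V.
Proof.
  move=> g_gt0 V_gap WV; apply/ffunP => k; rewrite !ffunE /=; case: eqP => // c12.
  have close i s : List.In (i, s) marked -> Rabs (cos2pi (W i s) - cos2pi (V i s)) < g / 2.
    move=> is_in; apply: Rle_lt_trans (cos2pi_lipschitz _ _) _.
    have := WV i s is_in; have := PI_RGT_0 => PI_gt0 WVs.
    have -> : g / 2 = 2 * PI * (g / (4 * PI)) by field; lra.
    by apply: Rmult_lt_compat_l; lra.
  move: (close _ _ (marked_c1 k)) (V_gap k c12); rewrite {2}c12.
  move: (close _ _ (marked_c2 k)); rewrite -c12.
  by do 2 case: RltbP; split_Rabs; lra.
Qed.

Lemma interpolation_round r U V e tau l l' W :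
  0 < tau < 1 -> tau <= e / 4 -> 0 <= l <= 1 ->
  cyclic_with_margin e U -> cyclic_with_margin e V ->
  (forall i x, List.In (i, x) marked ->
     Rabs (interpolate U V l' i x - interpolate U V l i x) <= e / 4) ->
  generic W -> (forall i x, List.In (i, x) marked -> Rabs (W i x - interpolate U V l i x) < tau) ->
  exists W', vt_path (state_of r W) (state_of r W') /\ generic W' /\
    forall i x, List.In (i, x) marked -> Rabs (W' i x - interpolate U V l' i x) < tau.
Proof.
  move=> tau01 tau_e l01 U_e V_e step W_gen W_near.
  have near_cyc W'' : near_either (interpolate U V l) (interpolate U V l') tau W'' -> cyclic W''.
    move=> near; apply: (cyclic_near_margin (cyclic_with_margin_interpolate l01 U_e V_e)) => i x ix.
    by have := step i x ix; case: (near i x ix); split_Rabs; lra.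
  have [W' [path [W'_gen [_ W'_near]]]] := round_toward r tau01 near_cyc (fun q qm => qm) W_gen
    (fun i x ix => or_introl (W_near i x ix)).
  by exists W'.
Qed.

Lemma interpolation_steps r U V e tau (K : nat) :
  0 < tau < 1 -> tau <= e / 4 -> 0 < INR K ->
  cyclic_with_margin e U -> cyclic_with_margin e V ->
  (forall i x, List.In (i, x) marked -> Rabs (V i x - U i x) / INR K <= e / 4) -> generic U ->
  forall k, (k <= K)%N -> exists W, vt_path (state_of r U) (state_of r W) /\ generic W /\
    forall i x, List.In (i, x) marked -> Rabs (W i x - interpolate U V (INR k / INR K) i x) < tau.
Proof.
  move=> tau01 tau_e K_gt0 U_e V_e VU_small U_gen.
  have step k i x : List.In (i, x) marked -> Rabs (interpolate U V (INR k.+1 / INR K) i x -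
      interpolate U V (INR k / INR K) i x) <= e / 4.
    move=> ix; rewrite /interpolate S_INR.
    rewrite (_ : _ - _ = (V i x - U i x) / INR K); last by field; lra.
    by rewrite Rabs_div ?(Rabs_right (INR K)); try lra; apply: VU_small.
  elim=> [_ | k IHk kK].
    exists U; split; first exact: rt_refl.
    by split=> // i x _; rewrite /interpolate /Rdiv Rmult_0_l; split_Rabs; lra.
  have [W [pathW [W_gen W_near]]] := IHk (ltnW kK).
  have k01 : 0 <= INR k / INR K <= 1.
    split; first by apply: Rdiv_le_0_compat; [apply: pos_INR | lra].
    by apply/Rle_div_l => //; rewrite Rmult_1_l; apply: le_INR; apply/leP; apply: ltnW.
  have [W' [pathW' W'P]] := interpolation_round r tau01 tau_e k01 U_e V_e (step k) W_gen W_near.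
  by exists W'; split; [apply: rt_trans pathW pathW' | ].
Qed.

(* [e] is a common cyclic margin of [U] and [V] and [g] the height gap of [V] at its
   self-crossings: steps of size [e / 4] keep every intermediate configuration cyclic, and
   ending within [g / (4 * PI)] of [V] already gives the state of [V]. *)
Lemma interpolation_path r U V : cyclic U -> generic U -> cyclic V -> generic V ->
  vt_path (state_of r U) (state_of r V).
Proof.
  move=> U_cyc U_gen V_cyc V_gen.
  have [eU eU_gt0 U_eU] := cyclic_margin U_cyc.
  have [eV eV_gt0 V_eV] := cyclic_margin V_cyc.
  pose e := Rmin eU eV; have e_gt0 : 0 < e by apply: Rmin_glb_lt.
  have U_e := cyclic_with_margin_le (Rmin_l eU eV) U_eU.
  have V_e := cyclic_with_margin_le (Rmin_r eU eV) V_eV.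
  have [g g_gt0 V_gap] := generic_gap V_gen.
  have [C C_ge0 C_bound] :=
    list_upper_bound marked (fun=> True) (fun p => Rabs (V p.1 p.2 - U p.1 p.2)).
  have [tau tau01 [tau_e tau_g]] : exists2 tau, 0 < tau < 1 & tau <= e / 4 /\ tau <= g / (4 * PI).
    by apply: small_positive; [lra | apply: Rdiv_lt_0_compat; have := PI_RGT_0; lra].
  have [n n_big] := INR_archimed (e / 4) C ltac:(lra).
  have K_gt0 : 0 < INR n.+1 by rewrite S_INR; have := pos_INR n; lra.
  have [W [pathW [_ W_near]]] : exists W, vt_path (state_of r U) (state_of r W) /\ generic W /\
      forall i x, List.In (i, x) marked ->
        Rabs (W i x - interpolate U V (INR n.+1 / INR n.+1) i x) < tau.
    apply: (interpolation_steps r (e := e)) => //; try lra.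
    move=> i x ix; apply/Rle_div_l => //; have := C_bound (i, x) ix I; rewrite S_INR /=; nra.
  rewrite -(@state_of_stable r V W g) // => i x ix; have := W_near i x ix.
  rewrite /interpolate /Rdiv Rinv_r; last lra.
  by rewrite Rminus_diag Rmult_0_l Rmult_1_l Rplus_0_l; lra.
Qed.

End Interpolation.

(** * Sorting components: changes between adjacent components *)

Definition swap_perm m (r : {perm 'I_m}) (a b : 'I_m) : {perm 'I_m} := (r * tperm (r a) (r b))%g.

Lemma swap_permE m (r : {perm 'I_m}) a b x :
  swap_perm r a b x = if x == a then r b else if x == b then r a else r x.
Proof.
  rewrite permM; case: (eqVneq x a) => [-> | xa]; first by rewrite tpermL.
  case: (eqVneq x b) => [-> | xb]; first by rewrite tpermR.
  by rewrite tpermD // (inj_eq perm_inj) eq_sym.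
Qed.

Lemma eq_perm_nat m (r : {perm 'I_m}) x y : (x == y) = ((r x : nat) == r y).
Proof. by rewrite (inj_eq val_inj) (inj_eq perm_inj). Qed.

Lemma state_of_swap m (cr : seq (crossing m)) (r : {perm 'I_m}) V a b :
  (r b = (r a).+1 :> nat) ->
  state_of cr (swap_perm r a b) V = change_between (state_of cr r V) a b.
Proof.
  move=> rab; have ab : a != b by apply/eqP => e; move: rab; rewrite e; lia.
  apply/ffunP => k; rewrite !ffunE /Defs.between /=.
  move: (cr_c1 (crossing_of k)) (cr_c2 (crossing_of k)) => c1 c2.
  case: eqP => [<- | /eqP c12].
    by case: (eqVneq c1 a) => [-> | _]; rewrite ?(negbTE ab) /= ?andbF.
  rewrite !swap_permE !(fun_if (@nat_of_ord m)) !(eq_perm_nat r) in c12 *.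
  move: (nat_of_ord (r c1)) (nat_of_ord (r c2)) (nat_of_ord (r a)) (nat_of_ord (r b)) rab c12.
  by move=> p1 p2 pa pb pab c12; repeat case: eqP => ? /=; lia.
Qed.

Definition inversions m (r r' : {perm 'I_m}) : {set 'I_m * 'I_m} :=
  [set p | (r p.1 < r p.2)%N && (r' p.2 < r' p.1)%N].

Lemma inversions_swap m (r r' : {perm 'I_m}) a b :
  (r b = (r a).+1 :> nat) -> (r' b < r' a)%N ->
  (#|inversions (swap_perm r a b) r'| < #|inversions r r'|)%N.
Proof.
  move=> rab r'ba; have ab : a != b by apply/eqP => e; move: rab; rewrite e; lia.
  apply: proper_card; apply/properP; split.
    apply/subsetP => -[x y]; rewrite !inE /= !swap_permE !(fun_if (@nat_of_ord m)) !(eq_perm_nat r).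
    move=> /andP [xy yx]; rewrite yx andbT; move: xy.
    have not_ba : ~ ((r x : nat) = r b /\ (r y : nat) = r a).
      by move=> [/val_inj/perm_inj xb /val_inj/perm_inj ya]; move: yx; rewrite xb ya; lia.
    move: (nat_of_ord (r x)) (nat_of_ord (r y)) (nat_of_ord (r a)) (nat_of_ord (r b)) rab not_ba.
    by move=> px py pa pb pab not_ba; repeat case: eqP => ? /=; lia.
  exists (a, b); first by rewrite inE /= r'ba andbT; lia.
  by rewrite inE /= !swap_permE !eqxx [b == a]eq_sym (negbTE ab); lia.
Qed.

Lemma increasing_perm_ge n (s : {perm 'I_n}) :
  (forall i j : 'I_n, (i < j)%N -> (s i < s j)%N) -> forall j : 'I_n, (j <= s j)%N.
Proof.
  move=> s_incr; suff ge d (j : 'I_n) : nat_of_ord j = d -> (j <= s j)%N by move=> j; apply: ge.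
  elim: d j => [j -> // | d IHd j jd].
  have d_lt : (d < n)%N by have := ltn_ord j; lia.
  have := IHd (Ordinal d_lt) erefl; have := s_incr (Ordinal d_lt) j; rewrite /=; lia.
Qed.

Lemma increasing_perm_id n (s : {perm 'I_n}) :
  (forall i j : 'I_n, (i < j)%N -> (s i < s j)%N) -> s = 1%g.
Proof.
  move=> s_incr; have sV_incr (i j : 'I_n) : (i < j)%N -> ((s^-1)%g i < (s^-1)%g j)%N.
    move=> ij; case: (ltngtP ((s^-1)%g i) ((s^-1)%g j)) => // [/s_incr | /val_inj e].
      by rewrite !permKV; lia.
    by move: ij; rewrite -(permKV s i) -(permKV s j) e; lia.
  apply/permP => j; apply: val_inj; rewrite perm1 /=.
  have := increasing_perm_ge s_incr j; have := increasing_perm_ge sV_incr (s j).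
  by rewrite permK; lia.
Qed.

(* If [r'] kept the order of every pair of components adjacent for [r], then
   [r^-1 * r'] would be increasing, hence the identity. *)
Lemma exists_adjacent_inversion m (r r' : {perm 'I_m}) : r <> r' ->
  exists a b, (r b = (r a).+1 :> nat) /\ (r' b < r' a)%N.
Proof.
  move=> rr'; apply: NNPP => no_adj; apply: rr'.
  have adj a b : (r b = (r a).+1 :> nat) -> (r' a < r' b)%N.
    move=> rab; case: (ltngtP (r' a) (r' b)) => // [r'ba | /val_inj /perm_inj e].
      by case: no_adj; exists a, b.
    by move: rab; rewrite e; lia.
  have far d a b : (r b = (r a + d.+1)%N :> nat) -> (r' a < r' b)%N.
    elim: d a => [| d IHd] a rab; first by apply: adj; lia.
    have next_lt : ((r a).+1 < m)%N by have := ltn_ord (r b); lia.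
    pose c := (r^-1)%g (Ordinal next_lt).
    have rc : (r c = (r a).+1 :> nat) by rewrite /c permKV.
    by have := adj a c rc; have := IHd c ltac:(lia); lia.
  have incr : forall i j : 'I_m, (i < j)%N -> (((r^-1)%g * r')%g i < ((r^-1)%g * r')%g j)%N.
    move=> i j ij; rewrite !permM; apply: (far (j - i)%N.-1).
    by rewrite !permKV; lia.
  apply/permP => x; have := congr1 (fun s : {perm 'I_m} => s (r x)) (increasing_perm_id incr).
  by rewrite permM permK perm1.
Qed.

Section Permutations.

Variables (m : nat) (cr : seq (crossing m)).

Hypothesis cr_params :
  forall k : 'I_(size cr), in01 (cr_s1 (crossing_of k)) /\ in01 (cr_s2 (crossing_of k)).

Notation vt_path := (clos_refl_trans _ (@vt_step m cr)).

Lemma swap_move (r : {perm 'I_m}) V (a b : 'I_m) :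
  cyclic_positions cr V -> generic_positions cr V ->
  (r b = (r a).+1 :> nat) -> move (state_of cr r V) (state_of cr (swap_perm r a b) V).
Proof.
  move=> V_cyc V_gen rab; right; exists a, b; split; last exact: state_of_swap.
  split; first by move=> e; move: rab; rewrite e; lia.
  (* The components of the realization lie in the disjoint bands around [3 * r i]. *)
  have [h [h_real [h_vt h_band]]] := state_of_realized cr_params r V_cyc V_gen.
  exists h; split=> //; split=> // -[c [s [t [u [ca [cb c_between]]]]]].
  have rb : INR (r b) = INR (r a) + 1 by rewrite rab S_INR.
  have := h_band a t; have := h_band a u; have := h_band b t; have := h_band b u.
  have := h_band c s; rewrite rb.
  case: (ltngtP (r c) (r a)) => [/ltn_INR | ac | /val_inj /perm_inj //]; first lra.
  have rcb : (r c : nat) <> r b by move/val_inj/perm_inj.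
  have /ltn_INR : (r b < r c)%N by move: ac rcb; rewrite rab; lia.
  by rewrite rb; lra.
Qed.

Lemma permutation_path (r r' : {perm 'I_m}) V : cyclic_positions cr V -> generic_positions cr V ->
  vt_path (state_of cr r V) (state_of cr r' V).
Proof.
  move=> V_cyc V_gen.
  suff path_le n (s : {perm 'I_m}) : (#|inversions s r'| <= n)%N ->
      vt_path (state_of cr s V) (state_of cr r' V) by apply: path_le.
  elim: n s => [|n IHn] s inv; case: (classic (s = r')) => [-> | sr']; try exact: rt_refl.
  all: have [a [b [sab r'ba]]] := exists_adjacent_inversion sr'.
  all: have fewer := inversions_swap sab r'ba.
    by have := leq_trans fewer inv.
  apply: (@rt_trans _ _ _ (state_of cr (swap_perm s a b) V)); last by apply: IHn; lia.
  apply: rt_step; split; first exact: swap_move.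
  exact: state_of_vertically_trivial.
Qed.

End Permutations.

Lemma vt_path_sequence m (cr : seq (crossing m)) (S T : state cr) :
  clos_refl_trans _ (@vt_step m cr) S T -> vertically_trivial_state S ->
  exists (n : nat) (Ds : nat -> state cr),
    Ds 0%nat = S /\ Ds n = T /\
    (forall i, (i <= n)%nat -> vertically_trivial_state (Ds i)) /\
    (forall i, (1 <= i <= n)%nat -> move (Ds i.-1) (Ds i)).
Proof.
  move=> path; elim: (@clos_rt_rt1n _ _ _ _ path) => [S' S'_vt | S' S'' T' [mv S''_vt] _ IH S'_vt].
    by exists 0%nat, (fun=> S'); do !split=> //; case.
  have [n [Ds [D0 [Dn [D_vt D_mv]]]]] := IH S''_vt.
  exists n.+1, (fun i => if i is i'.+1 then Ds i' else S'); do !split=> //.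
    by case=> [|i] /= in_n; [ | apply: D_vt].
  by case=> [|[|i]] //= in_n; [rewrite D0 | apply: (D_mv i.+1)].
Qed.

Section DiagramFacts.

Variables (m : nat) (gx gy : 'I_m -> R -> R) (cr : seq (crossing m)).
Hypothesis HD : is_diagram_projection gx gy cr.

Lemma diagram_crossing_params (k : 'I_(size cr)) :
  in01 (cr_s1 (crossing_of k)) /\ in01 (cr_s2 (crossing_of k)).
Proof. by have [_ [_ [_ [_ [crossings _]]]]] := HD; have [? [? _]] := crossings k. Qed.

Lemma diagram_self_crossing_distinct (k : 'I_(size cr)) :
  cr_c1 (crossing_of k) = cr_c2 (crossing_of k) -> cr_s1 (crossing_of k) <> cr_s2 (crossing_of k).
Proof.
  have [_ [_ [_ [_ [crossings _]]]]] := HD; have [_ [_ [distinct _]]] := crossings k.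
  by move=> c12 s12; apply: distinct.
Qed.

Lemma self_crossing_partner (k : 'I_(size cr)) i x : self_crossing_at k i x ->
  exists y, [/\ y <> x, in01 x, in01 y, gx i x = gx i y /\ gy i x = gy i y &
    crossing_at (crossing_of k) i x i y].
Proof.
  have [_ [_ [_ [_ [crossings _]]]]] := HD.
  have [s1_01 [s2_01 [distinct [ex [ey _]]]]] := crossings k.
  case=> [c1i [c2i [s1x | s2x]]]; rewrite c1i c2i in distinct ex ey.
  - exists (cr_s2 (crossing_of k)); rewrite -s1x; split=> //.
      by move=> e; apply: distinct; rewrite e.
    by left.
  - exists (cr_s1 (crossing_of k)); rewrite -s2x; split=> //.
      by move=> e; apply: distinct; rewrite e.
    by right.
Qed.

Lemma diagram_self_crossing_unique (k k' : 'I_(size cr)) i x :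
  self_crossing_at k i x -> self_crossing_at k' i x -> k = k'.
Proof.
  move=> /self_crossing_partner [y [yx x01 y01 [exy eyx] k_at]].
  move=> /self_crossing_partner [y' [y'x _ y'01 [exy' eyx'] k'_at]].
  have [_ [_ [_ [_ [_ [listed no_triple]]]]]] := HD.
  case: (classic (y = y')) => [yy' | yy'].
    subst y'.
    have [k0 [_ k0_uniq]] := listed i x i y x01 y01 (fun e => yx (esym (proj2 e))) exy eyx.
    by rewrite (k0_uniq k k_at) (k0_uniq k' k'_at).
  exfalso; apply: (no_triple i x i y i y' x01 y01 y'01) => //.
  - by case=> _ e; apply: yx.
  - by case=> _ e; apply: y'x.
  - by case=> _ e; apply: yy'.
Qed.

End DiagramFacts.

Definition half_positions m : 'I_m -> R -> R := fun _ x => x / 2.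

Section ReferencePositions.

Variables (m : nat) (cr : seq (crossing m)).
Hypothesis cr_params :
  forall k : 'I_(size cr), in01 (cr_s1 (crossing_of k)) /\ in01 (cr_s2 (crossing_of k)).
Hypothesis self_crossing_distinct : forall k : 'I_(size cr),
  cr_c1 (crossing_of k) = cr_c2 (crossing_of k) -> cr_s1 (crossing_of k) <> cr_s2 (crossing_of k).

Lemma half_positions_cyclic : cyclic_positions cr (@half_positions m).
Proof.
  move=> i x y /(marked_in01 cr_params) x01 /(marked_in01 cr_params) y01 xy.
  by rewrite /half_positions; lra.
Qed.

Lemma half_positions_generic : generic_positions cr (@half_positions m).
Proof.
  move=> k c12 /cos2pi_half_inj s12; apply: (self_crossing_distinct c12); apply: s12.
  - exact: (marked_in01 cr_params (marked_c1 k)).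
  - exact: (marked_in01 cr_params (marked_c2 k)).
Qed.

End ReferencePositions.

Local Close Scope R_scope.

Theorem proposition2p1 (m : nat) (gx gy : 'I_m -> R -> R)
    (cr : seq (crossing m)) (HD : is_diagram_projection gx gy cr)
    (D' D'' : state cr) :
  vertically_trivial_state D' -> vertically_trivial_state D'' ->
  exists (n : nat) (Ds : nat -> state cr),
    Ds 0%nat = D' /\ Ds n = D'' /\
    (forall i, (i <= n)%nat -> vertically_trivial_state (Ds i)) /\
    (forall i, (1 <= i <= n)%nat -> move (Ds i.-1) (Ds i)).
Proof.
  move=> D'_vt D''_vt; apply: (vt_path_sequence _ D'_vt).
  have params := diagram_crossing_params HD.
  have distinct := diagram_self_crossing_distinct HD.
  have unique := diagram_self_crossing_unique HD.
  have [r' [U' [U'_cyc [U'_gen <-]]]] := vertically_trivial_positions params D'_vt.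
  have [r'' [U'' [U''_cyc [U''_gen <-]]]] := vertically_trivial_positions params D''_vt.
  have half_cyc := half_positions_cyclic params.
  have half_gen := half_positions_generic params distinct.
  apply: (rt_trans _ _ _ (state_of cr r' (@half_positions m))).
    exact: interpolation_path.
  apply: (rt_trans _ _ _ (state_of cr r'' (@half_positions m))).
    exact: permutation_path.
  exact: interpolation_path.
Qed.
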